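(* Let $(G,\mathcal{B}_1,\mathcal{B}_2)$ be a Rota-Baxter system of groups with descendent operation $\circ$. For every $t\in G$, $G_t=G\circ e_t:=\{a\circ e_t\mid a\in G\}$, and $(G_t,\circ)$ is a group with identity element $e_t$.
   Context: A Rota-Baxter system of groups is a triple $(G,\mathcal{B}_1,\mathcal{B}_2)$ where $G$ is a group and $\mathcal{B}_1,\mathcal{B}_2:G\to G$ are maps such that for all $a,b\in G$: $\mathcal{B}_1(a)\mathcal{B}_1(b)=\mathcal{B}_1(\mathcal{B}_1(a)b\mathcal{B}_2(a))$ and $\mathcal{B}_2(b)\mathcal{B}_2(a)=\mathcal{B}_2(\mathcal{B}_1(a)b\mathcal{B}_2(a))$. Descendent operation: $a\circ b=\mathcal{B}_1(a)b\mathcal{B}_2(a)$. For $t\in G$: $e_t=\mathcal{B}_1(t)^{-1}t\mathcal{B}_2(t)^{-1}$ and $G_t=\{a\in G\mid a\circ e_t=a\}$. *)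

Set Implicit Arguments.

Record is_group (G : Type) (mul : G -> G -> G) (one : G) (inv : G -> G) : Prop := {
  grp_assoc : forall a b c, mul a (mul b c) = mul (mul a b) c;
  grp_mul1g : forall a, mul one a = a;
  grp_mulg1 : forall a, mul a one = a;
  grp_mulVg : forall a, mul (inv a) a = one;
  grp_mulgV : forall a, mul a (inv a) = one
}.

Definition is_RB_system (G : Type) (mul : G -> G -> G) (B1 B2 : G -> G) : Prop :=
  forall a b : G,
    mul (B1 a) (B1 b) = B1 (mul (mul (B1 a) b) (B2 a)) /\
    mul (B2 b) (B2 a) = B2 (mul (mul (B1 a) b) (B2 a)).

Definition desc_op (G : Type) (mul : G -> G -> G) (B1 B2 : G -> G) (a b : G) : G :=
  mul (mul (B1 a) b) (B2 a).

Definition e_of (G : Type) (mul : G -> G -> G) (inv : G -> G) (B1 B2 : G -> G) (t : G) : G :=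
  mul (mul (inv (B1 t)) t) (inv (B2 t)).

Definition G_sub (G : Type) (mul : G -> G -> G) (inv : G -> G) (B1 B2 : G -> G) (t : G) : G -> Prop :=
  fun a => desc_op mul B1 B2 a (e_of mul inv B1 B2 t) = a.

Definition is_group_on (G : Type) (S : G -> Prop) (op : G -> G -> G) (e : G) : Prop :=
  S e /\
  (forall a b, S a -> S b -> S (op a b)) /\
  (forall a b c, S a -> S b -> S c -> op a (op b c) = op (op a b) c) /\
  (forall a, S a -> op e a = a /\ op a e = a) /\
  (forall a, S a -> exists b, S b /\ op a b = e /\ op b a = e).


Set Implicit Arguments.

(* The Rota-Baxter identities say exactly that B1 and B2 are (anti)homomorphisms
   from (G, o) to G, which makes o associative and forces B1 e_t = B2 e_t = 1
   (since t o e_t = t); hence e_t is a left identity for o.  As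
   x o (B1(x)^-1 b B2(x)^-1) = b, every x has a right o-inverse, and right
   inverses in G_t = G o e_t are two-sided by the usual monoid argument. *)

Section GroupFacts.

Variables (G : Type) (mul : G -> G -> G) (one : G) (inv : G -> G).
Hypothesis HG : is_group mul one inv.

Lemma mulg_rid_unique (x y : G) : mul x y = x -> y = one.
Proof.
  intros Hxy.
  rewrite <- (grp_mul1g HG y), <- (grp_mulVg HG x), <- (grp_assoc HG), Hxy.
  reflexivity.
Qed.

Lemma mulg_lid_unique (x y : G) : mul y x = x -> y = one.
Proof.
  intros Hyx.
  rewrite <- (grp_mulg1 HG y), <- (grp_mulgV HG x), (grp_assoc HG), Hyx.
  reflexivity.
Qed.

Lemma mulg_conjVK (u v b : G) : mul (mul u (mul (mul (inv u) b) (inv v))) v = b.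
Proof.
  rewrite !(grp_assoc HG), (grp_mulgV HG), (grp_mul1g HG).
  rewrite <- (grp_assoc HG), (grp_mulVg HG), (grp_mulg1 HG).
  reflexivity.
Qed.

End GroupFacts.

Section DescendentGroup.

Variables (G : Type) (mul : G -> G -> G) (one : G) (inv : G -> G) (B1 B2 : G -> G).
Hypothesis HG : is_group mul one inv.
Hypothesis HRB : is_RB_system mul B1 B2.

Local Notation "a ∘ b" := (desc_op mul B1 B2 a b) (at level 40, left associativity).

Lemma B1_desc_op (a b : G) : B1 (a ∘ b) = mul (B1 a) (B1 b).
Proof. symmetry; apply (HRB a b). Qed.

Lemma B2_desc_op (a b : G) : B2 (a ∘ b) = mul (B2 b) (B2 a).
Proof. symmetry; apply (HRB a b). Qed.

Lemma desc_opA (a b c : G) : a ∘ (b ∘ c) = a ∘ b ∘ c.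
Proof.
  unfold desc_op at 3.
  rewrite B1_desc_op, B2_desc_op.
  unfold desc_op.
  rewrite !(grp_assoc HG).
  reflexivity.
Qed.

Lemma desc_op_solve (x b : G) :
  x ∘ mul (mul (inv (B1 x)) b) (inv (B2 x)) = b.
Proof. apply (mulg_conjVK HG). Qed.

Variable t : G.
Local Notation e_t := (e_of mul inv B1 B2 t).

Lemma desc_op_e_ofr : t ∘ e_t = t.
Proof. apply desc_op_solve. Qed.

Lemma B1_e_of : B1 e_t = one.
Proof.
  apply (mulg_rid_unique HG (x := B1 t)).
  rewrite <- B1_desc_op, desc_op_e_ofr.
  reflexivity.
Qed.

Lemma B2_e_of : B2 e_t = one.
Proof.
  apply (mulg_lid_unique HG (x := B2 t)).
  rewrite <- B2_desc_op, desc_op_e_ofr.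
  reflexivity.
Qed.

Lemma desc_op_e_ofl (b : G) : e_t ∘ b = b.
Proof.
  unfold desc_op.
  rewrite B1_e_of, B2_e_of, (grp_mul1g HG), (grp_mulg1 HG).
  reflexivity.
Qed.

Lemma G_sub_desc_op (a : G) : G_sub mul inv B1 B2 t (a ∘ e_t).
Proof.
  unfold G_sub.
  rewrite <- desc_opA, desc_op_e_ofl.
  reflexivity.
Qed.

Lemma G_sub_image (x : G) :
  G_sub mul inv B1 B2 t x <-> exists a : G, x = a ∘ e_t.
Proof.
  split.
  - intros Hx. exists x. symmetry. exact Hx.
  - intros [a ->]. apply G_sub_desc_op.
Qed.

Definition desc_inv (x : G) : G := mul (mul (inv (B1 x)) e_t) (inv (B2 x)) ∘ e_t.

Lemma desc_op_invr (x : G) : x ∘ desc_inv x = e_t.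
Proof.
  unfold desc_inv.
  rewrite desc_opA, desc_op_solve.
  apply desc_op_e_ofl.
Qed.

Lemma desc_op_invl (a : G) : G_sub mul inv B1 B2 t a -> desc_inv a ∘ a = e_t.
Proof.
  intros Ha.
  set (b := desc_inv a).
  assert (Hab : a ∘ b = e_t) by apply desc_op_invr.
  assert (Hbc : b ∘ desc_inv b = e_t) by apply desc_op_invr.
  transitivity (b ∘ a ∘ (b ∘ desc_inv b)).
  { unfold G_sub in Ha. rewrite Hbc, <- desc_opA, Ha. reflexivity. }
  rewrite <- !desc_opA, (desc_opA a b), Hab, desc_op_e_ofl.
  exact Hbc.
Qed.

Lemma G_sub_group : is_group_on (G_sub mul inv B1 B2 t) (desc_op mul B1 B2) e_t.
Proof.
  split; [| split; [| split; [| split]]].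
  - apply desc_op_e_ofl.
  - intros a b _ Hb. unfold G_sub in *. rewrite <- desc_opA, Hb. reflexivity.
  - intros a b c _ _ _. apply desc_opA.
  - intros a Ha. split; [apply desc_op_e_ofl | exact Ha].
  - intros a Ha. exists (desc_inv a).
    split; [apply G_sub_desc_op |].
    split; [apply desc_op_invr | apply desc_op_invl, Ha].
Qed.

End DescendentGroup.

Theorem lemma4p1 (G : Type) (mul : G -> G -> G) (one : G) (inv : G -> G)
  (B1 B2 : G -> G)
  (HG : is_group mul one inv)
  (HRB : is_RB_system mul B1 B2)
  (t : G) :
  (forall x : G,
     G_sub mul inv B1 B2 t x <->
     exists a : G, x = desc_op mul B1 B2 a (e_of mul inv B1 B2 t)) /\
  is_group_on (G_sub mul inv B1 B2 t) (desc_op mul B1 B2) (e_of mul inv B1 B2 t).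
Proof.
  split.
  - apply (G_sub_image HG HRB).
  - apply (G_sub_group HG HRB).
Qed.
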